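(* Consider a full-order cascade system with outer state $S_t\in\mathcal{S}\subseteq\mathbb{R}^n$, inner state $X_t\in\mathcal{X}\subseteq\mathbb{R}^m$, outer input $A_t\in\mathcal{A}\subseteq\mathbb{R}^p$ and inner input $U_t\in\mathcal{U}\subseteq\mathbb{R}^q$, with transition kernel $\mathbb{P}_F$, and a reduced-order model with state $S_t\in\mathcal{S}$, input $(A_t,X_t^\star)\in\mathcal{A}\times\mathcal{X}$ and transition kernel $\mathbb{P}_R$. Let $T>0$ be a horizon, $\mathcal{S}_{\mathrm{safe}}\subset\mathcal{S}$ a safe set, $\delta<1$, and let $\pi_R^\star$ be an optimal policy of the reduced-order constrained problem $\max_\pi J_r^R(\pi)$ subject to $J_c^R(\pi)\le\delta$ (so in particular $J_c^R(\pi_R^\star)\le\delta$). Deploy $\pi_R^\star$ on the full-order system with the inner-loop controller $U_t=K(X_t^\star,X_t)$. Suppose Assumptions (A1)–(A6) below hold. Then $$\mathbb{P}_K\Big(\bigcap_{t=0}^{T}\{S_t\in\mathcal{S}_{\mathrm{safe}}\}\ \Big|\ \pi_R^\star\Big)\ \ge\ 1-\delta-\frac{L}{1-\alpha}\big(e_0+\beta D\big).$$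
   Context: $\Delta(\cdot)$ denotes the set of probability measures. $\mathbb{P}_F:(\mathcal{S}\times\mathcal{X})\times(\mathcal{A}\times\mathcal{U})\to\Delta(\mathcal{S}\times\mathcal{X})$ and $\mathbb{P}_R:\mathcal{S}\times(\mathcal{A}\times\mathcal{X})\to\Delta(\mathcal{S})$. A (reduced-order) policy is a conditional distribution $\pi:\mathcal{S}\to\Delta(\mathcal{A}\times\mathcal{X})$ selecting $(A_t,X_t^\star)$ from $S_t$. With bounded reward $r:\mathcal{S}\times\mathcal{A}\times\mathcal{X}\to\mathbb{R}$, $J_r^R(\pi)=\mathbb{E}_R^\pi[\sum_{t=0}^T r(S_t,A_t,X_t^\star)]$; with cost $c(s)=\mathbf{1}\{s\notin\mathcal{S}_{\mathrm{safe}}\}$, $J_c^R(\pi)=\mathbb{E}_R^\pi[\sum_{t=0}^T c(S_t)]$, expectations taken in the reduced-order model. The closed-loop kernel is $\mathbb{P}_K((S_{t+1},X_{t+1})\mid(S_t,X_t),(A_t,X_t^\star)):=\mathbb{P}_F((S_{t+1},X_{t+1})\mid(S_t,X_t),(A_t,K(X_t^\star,X_t)))$, and its marginal outer-state kernel at time $t$ is $\mathbb{P}_K(s'\mid s,a,x^\star):=\sum_{x,x'\in\mathcal{X}}\mathbb{P}_K((s',x')\mid(s,x),(a,x^\star))\,\mathbb{P}_K(X_t=x)$. The total variation norm is $\|\mu-\nu\|_{TV}=\tfrac12\sum|\mu-\nu|$. For $P\succ0$, $\|v\|_P$ is the $P$-weighted norm. All expectations/probabilities for the full-order system refer to the closed-loop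 process with $\pi_R^\star$ and controller $K$. Assumptions: (A1) Cascade: $\mathbb{P}_F(X_{t+1}\mid S_t=s,X_t=x,A_t=a,U_t=u)=\mathbb{P}_F(X_{t+1}\mid X_t=x,U_t=u)$ for all $(s,x,a,u)$. (A2) Outer matching: $\mathbb{P}_F(S_{t+1}\mid S_t=s,X_t=x,A_t=a,U_t=u)=\mathbb{P}_R(S_{t+1}\mid S_t=s,A_t=a,X_t^\star=x)$ for all $(s,x,a,u)$. (A3) Tracking: with $e_t:=\mathbb{E}[\|X_t-X_t^\star\|_P]$, there exist $P\in\mathbb{S}^{m\times m}_{++}$, $\alpha\in(0,1)$, $\beta>0$ such that $e_t\le\alpha e_{t-1}+\beta\,\mathbb{E}[\|X_t^\star-X_{t-1}^\star\|_P]$ for all $t\ge1$. (A4) Reference variation: there exist nonnegative $d_1,\dots,d_T$ and $D>0$ with $\mathbb{E}[\|X_t^\star-X_{t-1}^\star\|_P]\le d_t$ for all $t\ge1$ and $\sum_{t=1}^T d_t\le D$. (A5) The initial outer-state distributions of the reduced-order and closed-loop full-order systems coincide. (A6) There is $L>0$ with $\|\mathbb{P}_R(\cdot\mid s,a,x')-\mathbb{P}_R(\cdot\mid s,a,x)\|_{TV}\le L\|x'-x\|_P$ for all $s,a,x,x'$. *)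

(* finite (discrete) spaces, reals given by a realType. *)
From HB Require Import structures.
From mathcomp Require Import all_boot all_order all_algebra.
From mathcomp Require Import reals.
Set Implicit Arguments. Unset Strict Implicit. Unset Printing Implicit Defensive.
Import Order.TTheory GRing.Theory Num.Theory.
Local Open Scope ring_scope.

Section Defs.
Variable R : realType.

Definition isdist (T : finType) (f : {ffun T -> R}) : Prop :=
  (forall x, 0 <= f x) /\ \sum_x f x = 1.

Definition tvnorm (T : finType) (mu nu : {ffun T -> R}) : R :=
  2^-1 * \sum_x `|mu x - nu x|.

Definition posdef (m : nat) (P : 'M[R]_m) : Prop :=
  P^T = P /\ forall v : 'cV[R]_m, v != 0 -> 0 < (v^T *m P *m v) 0 0.

Definition pnorm (m : nat) (P : 'M[R]_m) (v : 'cV[R]_m) : R :=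
  Num.sqrt ((v^T *m P *m v) 0 0).

Variables (S A X U : finType) (T : nat).

Definition tcur (t : 'I_T) : 'I_T.+1 := widen_ord (leqnSn T) t.
Definition tnext (t : 'I_T) : 'I_T.+1 := lift ord0 t.

Definition ftraj := {ffun 'I_T.+1 -> S * X * A * X}.
Definition fS (tau : ftraj) t : S := (tau t).1.1.1.
Definition fX (tau : ftraj) t : X := (tau t).1.1.2.
Definition fA (tau : ftraj) t : A := (tau t).1.2.
Definition fXs (tau : ftraj) t : X := (tau t).2.

Definition fweight (nu0 : {ffun S * X -> R}) (pi : S -> {ffun A * X -> R})
  (K : X -> X -> U) (PF : S -> X -> A -> U -> {ffun S * X -> R}) (tau : ftraj) : R :=
  nu0 (fS tau ord0, fX tau ord0) *
  (\prod_(t < T.+1) pi (fS tau t) (fA tau t, fXs tau t)) *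
  \prod_(t < T) PF (fS tau (tcur t)) (fX tau (tcur t)) (fA tau (tcur t))
                   (K (fXs tau (tcur t)) (fX tau (tcur t)))
                   (fS tau (tnext t), fX tau (tnext t)).

Definition fexp nu0 pi K PF (f : ftraj -> R) : R :=
  \sum_(tau : ftraj) fweight nu0 pi K PF tau * f tau.

Definition fsafeprob nu0 pi K PF (Ssafe : {set S}) : R :=
  \sum_(tau : ftraj | [forall t, fS tau t \in Ssafe]) fweight nu0 pi K PF tau.

Definition rtraj := {ffun 'I_T.+1 -> S * A * X}.
Definition rS (tau : rtraj) t : S := (tau t).1.1.
Definition rA (tau : rtraj) t : A := (tau t).1.2.
Definition rXs (tau : rtraj) t : X := (tau t).2.

Definition rweight (mu0 : {ffun S -> R}) (pi : S -> {ffun A * X -> R})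
  (PR : S -> A -> X -> {ffun S -> R}) (tau : rtraj) : R :=
  mu0 (rS tau ord0) *
  (\prod_(t < T.+1) pi (rS tau t) (rA tau t, rXs tau t)) *
  \prod_(t < T) PR (rS tau (tcur t)) (rA tau (tcur t)) (rXs tau (tcur t)) (rS tau (tnext t)).

Definition rexp mu0 pi PR (f : rtraj -> R) : R :=
  \sum_(tau : rtraj) rweight mu0 pi PR tau * f tau.

Definition JrR mu0 pi PR (r : S -> A -> X -> R) : R :=
  rexp mu0 pi PR (fun tau => \sum_(t < T.+1) r (rS tau t) (rA tau t) (rXs tau t)).
Definition JcR mu0 pi PR (Ssafe : {set S}) : R :=
  rexp mu0 pi PR (fun tau => \sum_(t < T.+1) (if rS tau t \in Ssafe then 0 else 1)).

End Defs.

(* Both closed loops are Markov chains on augmented states: (s, x, a, x⋆) for the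
   full-order system and (s, a, x⋆) for the reduced-order model.  Let W_j(y)
   ([safe_value]) be the probability that the reduced chain started at y is safe
   for j + 1 steps, and let h_k ([hybrid]) be the probability of staying safe up
   to T for the process that follows the full chain for k steps and the reduced
   chain afterwards.  By (A5) h_0 is the reduced safety probability, and h_T is
   the full one.  By (A2), one full step moves the outer state with
   P_R(. | s, a, X_k) where the reduced model uses P_R(. | s, a, X⋆_k), so
   h_k - h_(k+1) is at most the expected total variation between the two, which
   (A6) bounds by L e_k.  The union bound turns J_c^R <= delta into a reduced
   safety probability >= 1 - delta, and (A3)-(A4) give
   (1 - alpha) sum_(k<T) e_k <= e_0 + beta D. *)

From HB Require Import structures.
From mathcomp Require Import all_boot all_order all_algebra.
From mathcomp Require Import reals.
From mathcomp Require Import ring lra.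
Import Order.TTheory GRing.Theory Num.Theory.
Local Open Scope ring_scope.
Set Implicit Arguments. Unset Strict Implicit. Unset Printing Implicit Defensive.

Section TrajectoryRcons.
Variable Z : finType.

Definition traj_rcons T (sg : {ffun 'I_T.+1 -> Z}) (z : Z) : {ffun 'I_T.+2 -> Z} :=
  [ffun i => if unlift ord_max i is Some j then sg j else z].

Lemma traj_rcons_val T sg z (i : 'I_T.+2) (j : 'I_T.+1) :
  val i = val j -> traj_rcons sg z i = sg j.
Proof.
move=> eq_ij.
have -> : i = lift ord_max j by apply: val_inj; rewrite eq_ij; exact: esym (lift_max j).
by rewrite ffunE liftK.
Qed.

Lemma traj_rcons_last T sg z (i : 'I_T.+2) : val i = T.+1 -> traj_rcons sg z i = z.
Proof.
move=> iT; have -> : i = ord_max by apply: val_inj.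
by rewrite ffunE unlift_none.
Qed.

Lemma sum_traj_rcons (R : nmodType) T (F : {ffun 'I_T.+2 -> Z} -> R) :
  \sum_tau F tau = \sum_sg \sum_z F (traj_rcons sg z).
Proof.
rewrite pair_big /=.
apply: (reindex (fun p : {ffun 'I_T.+1 -> Z} * Z => traj_rcons p.1 p.2)).
exists (fun tau : {ffun 'I_T.+2 -> Z} =>
  ([ffun j : 'I_T.+1 => tau (lift ord_max j)], tau ord_max)).
  move=> [sg z] _ /=; rewrite traj_rcons_last //; congr pair.
  by apply/ffunP => j; rewrite ffunE; apply: traj_rcons_val; exact: lift_max.
move=> tau _; apply/ffunP => i; rewrite ffunE.
by case: unliftP => [j ->|->] //; rewrite ffunE.
Qed.

Lemma sum_traj1 (R : nmodType) (F : Z -> R) :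
  \sum_(tau : {ffun 'I_1 -> Z}) F (tau ord0) = \sum_z F z.
Proof.
rewrite (reindex (fun z : Z => [ffun _ : 'I_1 => z])) /=.
  by apply: eq_bigr => z _; rewrite ffunE.
exists (fun tau : {ffun 'I_1 -> Z} => tau ord0) => [z _|tau _]; first by rewrite ffunE.
by apply/ffunP => i; rewrite ffunE (ord1 i).
Qed.

End TrajectoryRcons.

Section Indicators.
Variable R : realType.

Lemma indicator_in01 (b : bool) : 0 <= (b%:R : R) <= 1.
Proof. by case: b; rewrite ?lexx ?ler01. Qed.

Lemma prod_indicator (I : finType) (P : pred I) :
  \prod_i (P i)%:R = [forall i, P i]%:R :> R.
Proof.
case: forallP => [allP | /forallP]; first by apply: big1 => i _; rewrite allP.
rewrite negb_forall => /existsP [i nPi].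
by rewrite (bigD1 i) //= (negbTE nPi) mul0r.
Qed.

Lemma sum_indicator (I : finType) (P : pred I) (F : I -> R) :
  \sum_(i | P i) F i = \sum_i F i * (P i)%:R.
Proof. by rewrite big_mkcond; apply: eq_bigr => i _; case: (P i); rewrite ?mulr1 ?mulr0. Qed.

End Indicators.

Section FeynmanKac.
Variables (R : realType) (Z : finType) (nu : Z -> R) (Q : Z -> Z -> R).

Definition chain_weight T (tau : {ffun 'I_T.+1 -> Z}) : R :=
  nu (tau ord0) * \prod_(t < T) Q (tau (tcur t)) (tau (tnext t)).

(* [feynman_kac g t z] is the unnormalised Feynman-Kac measure
   E[g_0(Z_0) ... g_(t-1)(Z_(t-1)); Z_t = z] of the chain started from [nu]. *)
Fixpoint feynman_kac (g : nat -> Z -> R) (t : nat) : Z -> R :=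
  if t is t'.+1 then fun z' => \sum_z feynman_kac g t' z * g t' z * Q z z' else nu.

Lemma sum_feynman_kac_succ g t (h : Z -> R) :
  \sum_z feynman_kac g t.+1 z * h z
  = \sum_z feynman_kac g t z * g t z * \sum_z' Q z z' * h z'.
Proof.
under eq_bigr do rewrite /= mulr_suml.
rewrite exchange_big; apply: eq_bigr => z _.
by rewrite mulr_sumr; apply: eq_bigr => z' _; rewrite mulrA.
Qed.

Lemma eq_feynman_kac g g' t :
  (forall s, (s < t)%N -> g s =1 g' s) -> feynman_kac g t =1 feynman_kac g' t.
Proof.
elim: t => [//|t IH] eq_gg' z /=.
apply: eq_bigr => y _; rewrite IH ?eq_gg' // => s lt_st.
by apply: eq_gg'; apply: ltnW.
Qed.

Lemma chain_weight_rcons T (sg : {ffun 'I_T.+1 -> Z}) z :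
  chain_weight (traj_rcons sg z) = chain_weight sg * Q (sg ord_max) z.
Proof.
rewrite /chain_weight big_ord_recr /= -mulrA; congr (_ * (_ * _)).
- by congr nu; apply: traj_rcons_val.
- by apply: eq_bigr => t _; congr Q; apply: traj_rcons_val.
- by congr Q; [apply: traj_rcons_val | apply: traj_rcons_last].
Qed.

Lemma sum_chain_weight_potential T (g : nat -> Z -> R) (h : Z -> R) :
  \sum_(tau : {ffun 'I_T.+1 -> Z})
     chain_weight tau * \prod_(t < T) g t (tau (tcur t)) * h (tau ord_max)
  = \sum_z feynman_kac g T z * h z.
Proof.
elim: T h => [|T IH] h.
  rewrite -(sum_traj1 (fun z => nu z * h z)).
  apply: eq_bigr => tau _; rewrite /chain_weight !big_ord0 !mulr1.
  by have -> : (ord_max : 'I_1) = ord0 by apply: val_inj.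
rewrite sum_traj_rcons sum_feynman_kac_succ.
under [RHS]eq_bigr do rewrite -mulrA.
rewrite -IH; apply: eq_bigr => sg _.
rewrite !mulr_sumr; apply: eq_bigr => z _.
rewrite chain_weight_rcons traj_rcons_last // big_ord_recr /=.
rewrite (traj_rcons_val _ _ (j := ord_max)) //.
under eq_bigr => t _ do rewrite (traj_rcons_val _ _ (j := tcur t)) //.
ring.
Qed.

Lemma sum_chain_weight_prod T (g : nat -> Z -> R) :
  \sum_(tau : {ffun 'I_T.+1 -> Z}) chain_weight tau * \prod_(t < T.+1) g t (tau t)
  = \sum_z feynman_kac g T z * g T z.
Proof.
rewrite -sum_chain_weight_potential.
by apply: eq_bigr => tau _; rewrite big_ord_recr mulrA.
Qed.

Lemma sum_chain_weight_forall T (P : pred Z) :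
  \sum_(tau : {ffun 'I_T.+1 -> Z} | [forall t, P (tau t)]) chain_weight tau
  = \sum_z feynman_kac (fun _ z => (P z)%:R) T z * (P z)%:R.
Proof.
rewrite sum_indicator -sum_chain_weight_prod.
by apply: eq_bigr => tau _; rewrite prod_indicator.
Qed.

Hypothesis nu_ge0 : forall z, 0 <= nu z.
Hypothesis Q_ge0 : forall z z', 0 <= Q z z'.

Lemma feynman_kac_ge0 g t z : (forall s y, 0 <= g s y) -> 0 <= feynman_kac g t z.
Proof.
move=> g_ge0; elim: t z => [|t IH] z //=.
by apply: sumr_ge0 => y _; rewrite !mulr_ge0.
Qed.

Lemma ler_feynman_kac g g' t z :
  (forall s y, 0 <= g s y <= g' s y) -> feynman_kac g t z <= feynman_kac g' t z.
Proof.
move=> le_gg'; have g_ge0 s y : 0 <= g s y by case/andP: (le_gg' s y).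
elim: t z => [|t IH] z //=; apply: ler_sum => y _.
apply: ler_wpM2r => //; apply: ler_pM => //; first exact: feynman_kac_ge0.
by case/andP: (le_gg' t y).
Qed.

Lemma chain_weight_ge0 T (tau : {ffun 'I_T.+1 -> Z}) : 0 <= chain_weight tau.
Proof. by rewrite mulr_ge0 //; apply: prodr_ge0. Qed.

Hypothesis Q_stochastic : forall z, \sum_z' Q z z' = 1.

Lemma sum_feynman_kac_mass g t :
  \sum_z feynman_kac g t.+1 z = \sum_z feynman_kac g t z * g t z.
Proof.
under eq_bigr do rewrite -[feynman_kac _ _ _]mulr1.
rewrite sum_feynman_kac_succ; apply: eq_bigr => z _.
by under eq_bigr do rewrite mulr1; rewrite Q_stochastic mulr1.
Qed.

Lemma sum_chain_weight_marginal T (i : 'I_T.+1) (h : Z -> R) :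
  \sum_(tau : {ffun 'I_T.+1 -> Z}) chain_weight tau * h (tau i)
  = \sum_z feynman_kac (fun _ _ => 1) i z * h z.
Proof.
pose g (s : nat) := if s == i then h else fun _ => 1.
have prod_g (tau : {ffun 'I_T.+1 -> Z}) : \prod_(t < T.+1) g t (tau t) = h (tau i).
  rewrite (bigD1 i) //= /g eqxx big1 ?mulr1 // => t ne_ti.
  by rewrite ifN.
have fk_g : feynman_kac g i =1 feynman_kac (fun _ _ => 1) i.
  by apply: eq_feynman_kac => s lt_si y; rewrite /g ifN // neq_ltn lt_si.
under eq_bigr do rewrite -prod_g.
rewrite sum_chain_weight_prod.
suff mass_from_i j : \sum_z feynman_kac g (i + j) z * g (i + j)%N z
                     = \sum_z feynman_kac (fun _ _ => 1) i z * h z.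
  by have := mass_from_i (T - i)%N; rewrite subnKC // -ltnS.
elim: j => [|j IH].
  by rewrite addn0; apply: eq_bigr => z _; rewrite fk_g /g eqxx.
rewrite addnS -IH -(sum_feynman_kac_mass g (i + j)); apply: eq_bigr => z _.
by rewrite /g ifN ?mulr1 // gtn_eqF // ltnS leq_addr.
Qed.

Lemma sum_chain_weight T : \sum_(tau : {ffun 'I_T.+1 -> Z}) chain_weight tau = \sum_z nu z.
Proof.
have := sum_chain_weight_marginal (ord0 : 'I_T.+1) (fun _ => 1).
by under eq_bigr do rewrite mulr1; move=> ->; under eq_bigr do rewrite mulr1.
Qed.

End FeynmanKac.

Section FiniteSums.
Variable R : realType.

Lemma sum_pairE (T1 T2 : finType) (F : T1 * T2 -> R) :
  \sum_z F z = \sum_a \sum_b F (a, b).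
Proof. by rewrite pair_big; apply: eq_bigr => -[]. Qed.

Lemma sum_prod3 (T1 T2 T3 : finType) (F : T1 * T2 * T3 -> R) :
  \sum_z F z = \sum_a \sum_(p : T2 * T3) F (a, p.1, p.2).
Proof. by rewrite !sum_pairE; apply: eq_bigr => a _; rewrite sum_pairE. Qed.

Lemma isdist_sum_pair (T1 T2 : finType) (mu : {ffun T1 * T2 -> R}) :
  isdist mu -> \sum_a \sum_b mu (a, b) = 1.
Proof. by case=> _; rewrite sum_pairE. Qed.

Lemma weighted_mean_in01 (I : finType) (w u : I -> R) :
  (forall i, 0 <= w i) -> \sum_i w i = 1 -> (forall i, 0 <= u i <= 1) ->
  0 <= \sum_i w i * u i <= 1.
Proof.
move=> w_ge0 w_sum u01; apply/andP; split.
  by apply: sumr_ge0 => i _; rewrite mulr_ge0 //; case/andP: (u01 i).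
rewrite -w_sum; apply: ler_sum => i _; rewrite ler_piMr //.
by case/andP: (u01 i).
Qed.

Lemma tvnorm_test_bound (S : finType) (mu nu : {ffun S -> R}) (u : S -> R) :
  isdist mu -> isdist nu -> (forall s, 0 <= u s <= 1) ->
  `|\sum_s (nu s - mu s) * u s| <= tvnorm mu nu.
Proof.
move=> [_ mu1] [_ nu1] u01.
have -> : \sum_s (nu s - mu s) * u s = \sum_s (nu s - mu s) * (u s - 2^-1).
  under [RHS]eq_bigr do rewrite mulrBr.
  by rewrite sumrB -mulr_suml sumrB mu1 nu1 subrr mul0r subr0.
rewrite /tvnorm mulr_sumr; apply: le_trans (ler_norm_sum _ _ _) _.
apply: ler_sum => s _; rewrite normrM distrC mulrC ler_wpM2r //.
by case/andP: (u01 s) => u0 u1; rewrite ler_norml; apply/andP; split; lra.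
Qed.

Lemma union_bound (I J : finType) (w : I -> R) (P : I -> pred J) :
  (forall i, 0 <= w i) -> \sum_i w i = 1 ->
  1 - \sum_i w i * \sum_j (if P i j then 0 else 1)
  <= \sum_(i | [forall j, P i j]) w i.
Proof.
move=> w_ge0 w_sum; rewrite -{1}w_sum -sumrB sum_indicator; apply: ler_sum => i _.
rewrite -{1}[w i]mulr1 -mulrBr ler_wpM2l //.
case: forallP => [allP | /forallP].
  by rewrite big1 ?subr0 // => j _; rewrite allP.
rewrite negb_forall => /existsP [j nPij].
rewrite subr_le0 (bigD1 j) //= (negbTE nPij) lerDl.
by apply: sumr_ge0 => k _; case: ifP.
Qed.

End FiniteSums.

Section Simulation.
Variables (R : realType) (ZF ZR : finType) (f : ZF -> ZR).
Variables (nuF : ZF -> R) (QF : ZF -> ZF -> R) (nuR : ZR -> R) (QR : ZR -> ZR -> R).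
Variables (safe : pred ZR) (eps : ZF -> R).

Hypothesis nuF_ge0 : forall z, 0 <= nuF z.
Hypothesis QF_ge0 : forall z z', 0 <= QF z z'.
Hypothesis QF_stochastic : forall z, \sum_z' QF z z' = 1.
Hypothesis QR_ge0 : forall y y', 0 <= QR y y'.
Hypothesis QR_stochastic : forall y, \sum_y' QR y y' = 1.
Hypothesis nuF_push : forall h : ZR -> R, \sum_z nuF z * h (f z) = \sum_y nuR y * h y.
Hypothesis QF_QR_gap : forall z (u : ZR -> R), (forall y, 0 <= u y <= 1) ->
  \sum_y QR (f z) y * u y - \sum_z' QF z z' * u (f z') <= eps z.

Fixpoint safe_value (j : nat) : ZR -> R :=
  if j is j'.+1 then fun y => (safe y)%:R * \sum_y' QR y y' * safe_value j' y'
  else fun y => (safe y)%:R.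

Lemma safe_value_in01 j y : 0 <= safe_value j y <= 1.
Proof.
elim: j y => [|j IH] y /=; first exact: indicator_in01.
have /andP [ind0 ind1] := indicator_in01 R (safe y).
have /andP [mean0 mean1] := weighted_mean_in01 (QR_ge0 y) (QR_stochastic y) IH.
by rewrite mulr_ge0 //= mulr_ile1.
Qed.

Lemma sum_feynman_kac_safe_value k j :
  \sum_y feynman_kac nuR QR (fun _ y => (safe y)%:R) k y * safe_value j y
  = \sum_y nuR y * safe_value (k + j) y.
Proof.
elim: k j => [//|k IH] j.
rewrite sum_feynman_kac_succ addSnnS -IH; apply: eq_bigr => y _.
by rewrite /= mulrA.
Qed.

Lemma reduced_safe_prob T :
  \sum_(sg : {ffun 'I_T.+1 -> ZR} | [forall t, safe (sg t)]) chain_weight nuR QR sg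
  = \sum_y nuR y * safe_value T y.
Proof. by rewrite sum_chain_weight_forall -[T in RHS]addn0 -sum_feynman_kac_safe_value. Qed.

Variable T : nat.

Definition hybrid (k : nat) : R :=
  \sum_z feynman_kac nuF QF (fun _ z => (safe (f z))%:R) k z * safe_value (T - k) (f z).

Lemma hybrid0 : hybrid 0 = \sum_y nuR y * safe_value T y.
Proof. by rewrite /hybrid subn0 nuF_push. Qed.

Lemma hybridT :
  hybrid T = \sum_(tau : {ffun 'I_T.+1 -> ZF} | [forall t, safe (f (tau t))])
               chain_weight nuF QF tau.
Proof.
by rewrite (sum_chain_weight_forall nuF QF T (fun z => safe (f z))) /hybrid subnn.
Qed.

Lemma hybrid_step (k : 'I_T) :
  hybrid k - hybrid k.+1 <= \sum_tau chain_weight nuF QF tau * eps (tau (tcur k)).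
Proof.
have eps_ge0 z : 0 <= eps z.
  apply: le_trans (QF_QR_gap z (fun _ => indicator_in01 R false)).
  by rewrite !big1 ?subr0 // => *; rewrite mulr0.
rewrite (sum_chain_weight_marginal nuF QF_stochastic) /hybrid -(subnSK (ltn_ord k)).
rewrite sum_feynman_kac_succ -sumrB; apply: ler_sum => z _ /=.
have /andP [ind0 ind1] := indicator_in01 R (safe (f z)).
have fk_ge0 : 0 <= feynman_kac nuF QF (fun _ z => (safe (f z))%:R) k z.
  by apply: feynman_kac_ge0 => // s y; case/andP: (indicator_in01 R (safe (f y))).
have fk_le : feynman_kac nuF QF (fun _ z => (safe (f z))%:R) k z
             <= feynman_kac nuF QF (fun _ _ => 1) k z.
  by apply: ler_feynman_kac => // s y; apply: indicator_in01.
rewrite mulrA -mulrBr; apply: le_trans (ler_wpM2l _ (QF_QR_gap _ (safe_value_in01 _))) _.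
  exact: mulr_ge0.
by apply: ler_wpM2r => //; rewrite -[leRHS]mulr1; apply: ler_pM.
Qed.

Theorem simulation_bound :
  \sum_(sg : {ffun 'I_T.+1 -> ZR} | [forall t, safe (sg t)]) chain_weight nuR QR sg
  - \sum_(k < T) \sum_tau chain_weight nuF QF tau * eps (tau (tcur k))
  <= \sum_(tau : {ffun 'I_T.+1 -> ZF} | [forall t, safe (f (tau t))]) chain_weight nuF QF tau.
Proof.
have telescope : \sum_(k < T) (hybrid k - hybrid k.+1) = hybrid 0 - hybrid T.
  rewrite -(big_mkord xpredT (fun k => hybrid k - hybrid k.+1)).
  rewrite (telescope_sumr_eq (fun k => - hybrid k)) ?opprK 1?addrC // => k _.
  by rewrite opprK addrC.
have : \sum_(k < T) (hybrid k - hybrid k.+1)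
        <= \sum_(k < T) \sum_tau chain_weight nuF QF tau * eps (tau (tcur k)).
  by apply: ler_sum => k _; apply: hybrid_step.
by rewrite telescope reduced_safe_prob -hybrid0 -hybridT; lra.
Qed.

End Simulation.

Section ClosedLoop.
Variables (R : realType) (S A X U : finType).
Variables (PF : S -> X -> A -> U -> {ffun S * X -> R}) (PR : S -> A -> X -> {ffun S -> R}).
Variables (K : X -> X -> U) (pi : S -> {ffun A * X -> R}).
Variables (nu0 : {ffun S * X -> R}) (mu0 : {ffun S -> R}).

Hypothesis PF_dist : forall s x a u, isdist (PF s x a u).
Hypothesis PR_dist : forall s a x, isdist (PR s a x).
Hypothesis pi_dist : forall s, isdist (pi s).
Hypothesis nu0_dist : isdist nu0.
Hypothesis mu0_dist : isdist mu0.
Hypothesis outer_matching : forall s x a u s', \sum_x' PF s x a u (s', x') = PR s a x s'.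
Hypothesis init_matching : forall s, \sum_x nu0 (s, x) = mu0 s.

(* A full-order state [(s, x, a, xs)] records the outer and inner states and the
   pair (action, reference) drawn from [pi s]; the reduced-order state forgets [x]. *)
Definition full_init (z : S * X * A * X) : R :=
  nu0 (z.1.1.1, z.1.1.2) * pi z.1.1.1 (z.1.2, z.2).
Definition full_kernel (z z' : S * X * A * X) : R :=
  PF z.1.1.1 z.1.1.2 z.1.2 (K z.2 z.1.1.2) (z'.1.1.1, z'.1.1.2) * pi z'.1.1.1 (z'.1.2, z'.2).
Definition reduced_init (y : S * A * X) : R := mu0 y.1.1 * pi y.1.1 (y.1.2, y.2).
Definition reduced_kernel (y y' : S * A * X) : R :=
  PR y.1.1 y.1.2 y.2 y'.1.1 * pi y'.1.1 (y'.1.2, y'.2).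
Definition outer_view (z : S * X * A * X) : S * A * X := (z.1.1.1, z.1.2, z.2).
Definition tracking_tv (z : S * X * A * X) : R :=
  tvnorm (PR z.1.1.1 z.1.2 z.1.1.2) (PR z.1.1.1 z.1.2 z.2).

Definition rsafeprob T (Ssafe : {set S}) : R :=
  \sum_(tau : rtraj S A X T | [forall t, rS tau t \in Ssafe]) rweight mu0 pi PR tau.

Lemma fweight_chain_weight T (tau : ftraj S A X T) :
  fweight nu0 pi K PF tau = chain_weight full_init full_kernel tau.
Proof.
rewrite /fweight /chain_weight /full_kernel big_split big_ord_recl /= /full_init.
rewrite /fS /fX /fA /fXs /tnext; ring.
Qed.

Lemma rweight_chain_weight T (tau : rtraj S A X T) :
  rweight mu0 pi PR tau = chain_weight reduced_init reduced_kernel tau.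
Proof.
rewrite /rweight /chain_weight /reduced_kernel big_split big_ord_recl /= /reduced_init.
rewrite /rS /rA /rXs /tnext; ring.
Qed.

Lemma pi_mass s : \sum_(p : A * X) pi s (p.1, p.2) = 1.
Proof. by rewrite -(proj2 (pi_dist s)); apply: eq_bigr => -[]. Qed.

Lemma full_init_ge0 z : 0 <= full_init z.
Proof. by apply: mulr_ge0; [apply: (proj1 nu0_dist) | apply: (proj1 (pi_dist _))]. Qed.

Lemma full_kernel_ge0 z z' : 0 <= full_kernel z z'.
Proof. by apply: mulr_ge0; [apply: (proj1 (PF_dist _ _ _ _)) | apply: (proj1 (pi_dist _))]. Qed.

Lemma reduced_init_ge0 y : 0 <= reduced_init y.
Proof. by apply: mulr_ge0; [apply: (proj1 mu0_dist) | apply: (proj1 (pi_dist _))]. Qed.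

Lemma reduced_kernel_ge0 y y' : 0 <= reduced_kernel y y'.
Proof. by apply: mulr_ge0; [apply: (proj1 (PR_dist _ _ _)) | apply: (proj1 (pi_dist _))]. Qed.

Lemma full_kernel_stochastic z : \sum_z' full_kernel z z' = 1.
Proof.
rewrite -(isdist_sum_pair (PF_dist z.1.1.1 z.1.1.2 z.1.2 (K z.2 z.1.1.2))).
rewrite sum_prod3 sum_pairE; apply: eq_bigr => s _; apply: eq_bigr => x _.
by rewrite /full_kernel /= -mulr_sumr pi_mass mulr1.
Qed.

Lemma reduced_kernel_stochastic y : \sum_y' reduced_kernel y y' = 1.
Proof.
rewrite -(proj2 (PR_dist y.1.1 y.1.2 y.2)) sum_prod3; apply: eq_bigr => s _.
by rewrite /reduced_kernel /= -mulr_sumr pi_mass mulr1.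
Qed.

Lemma reduced_init_mass : \sum_y reduced_init y = 1.
Proof.
rewrite -(proj2 mu0_dist) sum_prod3; apply: eq_bigr => s _.
by rewrite /reduced_init /= -mulr_sumr pi_mass mulr1.
Qed.

Lemma full_init_push (h : S * A * X -> R) :
  \sum_z full_init z * h (outer_view z) = \sum_y reduced_init y * h y.
Proof.
rewrite sum_prod3 sum_pairE sum_prod3; apply: eq_bigr => s _.
rewrite exchange_big /=; apply: eq_bigr => p _.
by rewrite /reduced_init /= -init_matching !mulr_suml.
Qed.

Lemma kernel_gap_le_tracking_tv z (u : S * A * X -> R) : (forall y, 0 <= u y <= 1) ->
  \sum_y reduced_kernel (outer_view z) y * u y
  - \sum_z' full_kernel z z' * u (outer_view z') <= tracking_tv z.
Proof.
move=> u01; pose v s' := \sum_(p : A * X) pi s' (p.1, p.2) * u (s', p.1, p.2).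
have reduced_step : \sum_y reduced_kernel (outer_view z) y * u y
                    = \sum_s' PR z.1.1.1 z.1.2 z.2 s' * v s'.
  rewrite sum_prod3; apply: eq_bigr => s' _.
  by rewrite mulr_sumr; apply: eq_bigr => p _; rewrite mulrA.
have full_step : \sum_z' full_kernel z z' * u (outer_view z')
                 = \sum_s' PR z.1.1.1 z.1.2 z.1.1.2 s' * v s'.
  rewrite sum_prod3 sum_pairE; apply: eq_bigr => s' _.
  rewrite -(outer_matching _ _ _ (K z.2 z.1.1.2)) mulr_suml; apply: eq_bigr => x' _.
  by rewrite mulr_sumr; apply: eq_bigr => p _; rewrite mulrA.
rewrite reduced_step full_step -sumrB.
under eq_bigr do rewrite -mulrBl.
apply: le_trans (ler_norm _) (tvnorm_test_bound _ _ _) => // s'.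
apply: weighted_mean_in01 => [p||p] //; [by case: (pi_dist s') | exact: pi_mass].
Qed.

Lemma fweight_ge0 T (tau : ftraj S A X T) : 0 <= fweight nu0 pi K PF tau.
Proof.
rewrite fweight_chain_weight chain_weight_ge0 //.
  exact: full_init_ge0.
exact: full_kernel_ge0.
Qed.

Lemma fsafeprob_ge T (Ssafe : {set S}) :
  rsafeprob T Ssafe
  - \sum_(k < T) fexp nu0 pi K PF (fun tau => tracking_tv (tau (tcur k)))
  <= fsafeprob T nu0 pi K PF Ssafe.
Proof.
rewrite /rsafeprob /fsafeprob /fexp.
under eq_bigr do rewrite rweight_chain_weight.
under [\sum_(k < T) _]eq_bigr => k _ do under eq_bigr do rewrite fweight_chain_weight.
under [X in _ <= X]eq_bigr do rewrite fweight_chain_weight.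
exact: (simulation_bound (fun y => y.1.1 \in Ssafe) full_init_ge0 full_kernel_ge0
  full_kernel_stochastic reduced_kernel_ge0 reduced_kernel_stochastic full_init_push
  kernel_gap_le_tracking_tv T).
Qed.

Lemma rsafeprob_ge T (Ssafe : {set S}) : 1 - JcR T mu0 pi PR Ssafe <= rsafeprob T Ssafe.
Proof.
apply: (union_bound (fun tau t => rS tau t \in Ssafe)) => [tau|].
  rewrite rweight_chain_weight chain_weight_ge0 //.
    exact: reduced_init_ge0.
  exact: reduced_kernel_ge0.
under eq_bigr do rewrite rweight_chain_weight.
by rewrite (sum_chain_weight _ reduced_kernel_stochastic) reduced_init_mass.
Qed.

End ClosedLoop.

Lemma sum_tracking_error_le (R : realFieldType) T (e : 'I_T.+1 -> R) (v : 'I_T -> R)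
    (alpha beta D : R) :
  alpha < 1 -> 0 <= beta -> 0 <= e ord_max ->
  (forall t, e (tnext t) <= alpha * e (tcur t) + beta * v t) ->
  \sum_t v t <= D ->
  \sum_(t < T) e (tcur t) <= (e ord0 + beta * D) / (1 - alpha).
Proof.
move=> alpha_lt1 beta_ge0 e_last_ge0 e_rec v_sum.
have shift : \sum_t e (tcur t) + e ord_max = e ord0 + \sum_t e (tnext t).
  by rewrite -big_ord_recr big_ord_recl.
have sum_rec : \sum_t e (tnext t) <= alpha * \sum_t e (tcur t) + beta * \sum_t v t.
  by rewrite !mulr_sumr -big_split; apply: ler_sum => t _; apply: e_rec.
have := ler_wpM2l beta_ge0 v_sum.
rewrite ler_pdivlMr ?subr_gt0 // mulrBr mulr1; lra.
Qed.

Theorem theorem1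
  (R : realType) (n m p q : nat) (S A X U : finType)
  (se : S -> 'cV[R]_n) (ae : A -> 'cV[R]_p) (xe : X -> 'cV[R]_m) (ue : U -> 'cV[R]_q)
  (se_inj : injective se) (ae_inj : injective ae)
  (xe_inj : injective xe) (ue_inj : injective ue)
  (PF : S -> X -> A -> U -> {ffun S * X -> R})
  (PR : S -> A -> X -> {ffun S -> R})
  (PF_dist : forall s x a u, isdist (PF s x a u))
  (PR_dist : forall s a x, isdist (PR s a x))
  (T : nat) (T_pos : (0 < T)%N)
  (Ssafe : {set S}) (delta : R) (delta_lt1 : delta < 1)
  (r : S -> A -> X -> R)
  (mu0 : {ffun S -> R}) (mu0_dist : isdist mu0)
  (nu0 : {ffun S * X -> R}) (nu0_dist : isdist nu0)
  (K : X -> X -> U)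
  (pistar : S -> {ffun A * X -> R}) (pistar_dist : forall s, isdist (pistar s))
  (* pistar is an optimal policy of the reduced-order constrained problem *)
  (pistar_feas : JcR T mu0 pistar PR Ssafe <= delta)
  (pistar_opt : forall pi : S -> {ffun A * X -> R},
      (forall s, isdist (pi s)) -> JcR T mu0 pi PR Ssafe <= delta ->
      JrR T mu0 pi PR r <= JrR T mu0 pistar PR r)
  (* (A1) cascade *)
  (A1 : forall s s' x a a' u x',
      \sum_(s'' : S) PF s x a u (s'', x') = \sum_(s'' : S) PF s' x a' u (s'', x'))
  (* (A2) outer matching *)
  (A2 : forall s x a u s',
      \sum_(x' : X) PF s x a u (s', x') = PR s a x s')
  (* (A3) tracking *)
  (P : 'M[R]_m) (alpha beta : R)
  (P_pd : posdef P) (alpha_pos : 0 < alpha) (alpha_lt1 : alpha < 1) (beta_pos : 0 < beta)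
  (A3 : forall t : 'I_T,
      fexp nu0 pistar K PF
        (fun tau => pnorm P (xe (fX tau (tnext t)) - xe (fXs tau (tnext t))))
      <= alpha * fexp nu0 pistar K PF
                   (fun tau => pnorm P (xe (fX tau (tcur t)) - xe (fXs tau (tcur t))))
         + beta * fexp nu0 pistar K PF
                   (fun tau => pnorm P (xe (fXs tau (tnext t)) - xe (fXs tau (tcur t)))))
  (* (A4) reference variation *)
  (d : nat -> R) (D : R) (D_pos : 0 < D)
  (d_nonneg : forall t, (1 <= t <= T)%N -> 0 <= d t)
  (A4_var : forall t : 'I_T,
      fexp nu0 pistar K PF
        (fun tau => pnorm P (xe (fXs tau (tnext t)) - xe (fXs tau (tcur t)))) <= d t.+1)
  (A4_sum : \sum_(t < T) d t.+1 <= D)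
  (* (A5) same initial outer-state distribution *)
  (A5 : forall s, \sum_(x : X) nu0 (s, x) = mu0 s)
  (* (A6) Lipschitz reduced-order kernel *)
  (L : R) (L_pos : 0 < L)
  (A6 : forall s a x x', tvnorm (PR s a x') (PR s a x) <= L * pnorm P (xe x' - xe x)) :
  let e0 := fexp nu0 pistar K PF
              (fun tau : ftraj S A X T => pnorm P (xe (fX tau ord0) - xe (fXs tau ord0))) in
  fsafeprob T nu0 pistar K PF Ssafe >= 1 - delta - L / (1 - alpha) * (e0 + beta * D).
Proof.
cbv zeta; set e0 := fexp nu0 pistar K PF _.
pose E (t : 'I_T.+1) :=
  fexp nu0 pistar K PF (fun tau : ftraj S A X T => pnorm P (xe (fX tau t) - xe (fXs tau t))).
have w_ge0 := fweight_ge0 K PF_dist pistar_dist nu0_dist (T := T).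
have tv_le k :
    fexp nu0 pistar K PF (fun tau => tracking_tv PR (tau (tcur k))) <= L * E (tcur k).
  rewrite /fexp mulr_sumr; apply: ler_sum => tau _.
  by rewrite [leRHS]mulrCA; apply: ler_wpM2l; [apply: w_ge0 | apply: A6].
have sumE : \sum_(k < T) E (tcur k) <= (e0 + beta * D) / (1 - alpha).
  apply: (sum_tracking_error_le alpha_lt1 (ltW beta_pos) _ A3).
    by apply: sumr_ge0 => tau _; rewrite mulr_ge0 ?sqrtr_ge0.
  by apply: le_trans A4_sum; apply: ler_sum => t _; apply: A4_var.
have sum_tv : \sum_(k < T) fexp nu0 pistar K PF (fun tau => tracking_tv PR (tau (tcur k)))
              <= L / (1 - alpha) * (e0 + beta * D).
  rewrite mulrAC -mulrA; apply: le_trans (ler_wpM2l (ltW L_pos) sumE).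
  by rewrite mulr_sumr; apply: ler_sum => k _; apply: tv_le.
have := fsafeprob_ge K PF_dist PR_dist pistar_dist nu0_dist A2 A5 T Ssafe.
have := rsafeprob_ge PR_dist pistar_dist mu0_dist T Ssafe.
lra.
Qed.
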